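(* Let $r\neq0$ be an integer and $K$ a field of characteristic not dividing $2r$ and different from $3$, and assume $r=\varepsilon^4$ for some $\varepsilon\in K$. Let $E_r$ be the elliptic curve $y^2=x^3-r^{-1}x$ with point at infinity $O$, and define $S_0=\{(a,b)\in K^2: b^2=a^3-a,\ a^4+6a^2-3=0\}$, $S_1=\{(a,b)\in K^2: b^2=a^3-a,\ 3a^4-6a^2-1=0\}$, $S_{1,r}=\{(a,b)\in K^2: b^2=a^3-r^{-1}a,\ 3r^2a^4-6ra^2-1=0\}$. Then there exist bijections $E_r[3](K)\setminus\{O\}\to S_{1,r}\to S_1\to S_0$, where $E_r[3](K)$ is the set of $K$-rational $3$-torsion points of $E_r$. *)

From HB Require Import structures.
From mathcomp Require Import all_boot all_order all_algebra.
Set Implicit Arguments. Unset Strict Implicit. Unset Printing Implicit Defensive.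
Import Order.TTheory GRing.Theory Num.Theory.
Local Open Scope ring_scope.

Section EC.
Variable K : fieldType.

(* Points of y^2 = x^3 + A x:  None is the point at infinity O,
   Some (x, y) an affine point. *)
Definition on_curve (A : K) (p : K * K) : bool :=
  p.2 ^+ 2 == p.1 ^+ 3 + A * p.1.

Definition ec_add (A : K) (P Q : option (K * K)) : option (K * K) :=
  match P, Q with
  | None, _ => Q
  | _, None => P
  | Some (x1, y1), Some (x2, y2) =>
      if x1 == x2 then
        if y1 == - y2 then None
        else
          let l := (3%:R * x1 ^+ 2 + A) / (2%:R * y1) in
          let x3 := l ^+ 2 - x1 - x2 in
          Some (x3, l * (x1 - x3) - y1)
      else
        let l := (y2 - y1) / (x2 - x1) in
        let x3 := l ^+ 2 - x1 - x2 in
        Some (x3, l * (x1 - x3) - y1)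
  end.

Definition Ar (r : int) : K := - (r%:~R)^-1.

(* E_r[3](K) \ {O}: affine K-points P of E_r with 3P = O. *)
Definition E3 (r : int) :=
  {p : K * K | on_curve (Ar r) p &&
     (ec_add (Ar r) (Some p) (ec_add (Ar r) (Some p) (Some p)) == None)}.

Definition S0 :=
  {p : K * K | (p.2 ^+ 2 == p.1 ^+ 3 - p.1) &&
               (p.1 ^+ 4 + 6%:R * p.1 ^+ 2 - 3%:R == 0)}.

Definition S1 :=
  {p : K * K | (p.2 ^+ 2 == p.1 ^+ 3 - p.1) &&
               (3%:R * p.1 ^+ 4 - 6%:R * p.1 ^+ 2 - 1 == 0)}.

Definition S1r (r : int) :=
  {p : K * K | (p.2 ^+ 2 == p.1 ^+ 3 - (r%:~R)^-1 * p.1) &&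
     (3%:R * (r%:~R) ^+ 2 * p.1 ^+ 4 - 6%:R * r%:~R * p.1 ^+ 2 - 1 == 0)}.

End EC.

(* On y^2 = x^3 + A x with A != 0 in characteristic not 2, an affine point P
   satisfies 3P = O iff x(2P) = x(P); by the tangent formula this happens
   exactly when the 3-division polynomial psi3(x) = 3x^4 + 6Ax^2 - A^2
   vanishes (2-torsion points never qualify).  For A = -1/r this equation is
   3r^2x^4 - 6rx^2 - 1 = 0 after clearing denominators, so E_r[3] \ {O} is
   S_{1,r} itself.  Since r = eps^4, (x, y) |-> (eps^2 x, eps^3 y) is an
   isomorphism E_r -> E_1 which preserves psi3 = 0, whence S_{1,r} ~ S_1.
   Finally, translation by the 2-torsion point (0, 0) of E_1,
   (x, y) |-> (-1/x, y/x^2), is an involution away from x = 0 turning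
   3x^4 - 6x^2 - 1 into -(x^4 + 6x^2 - 3)/x^4, whence S_1 ~ S_0. *)

From HB Require Import structures.
From mathcomp Require Import all_boot all_order all_algebra.
From mathcomp Require Import ring.
Set Implicit Arguments. Unset Strict Implicit. Unset Printing Implicit Defensive.
Import Order.TTheory GRing.Theory Num.Theory.
Local Open Scope ring_scope.

Lemma sig_bijective (T U : Type) (P : pred T) (Q : pred U) (f : T -> U) (g : U -> T) :
    (forall x, P x -> Q (f x)) -> (forall y, Q y -> P (g y)) ->
    (forall x, P x -> g (f x) = x) -> (forall y, Q y -> f (g y) = y) ->
  exists F : {x | P x} -> {y | Q y}, bijective F.
Proof.
move=> PQf QPg fK gK.
exists (fun x => exist _ (f (val x)) (PQf _ (valP x))).
exists (fun y => exist _ (g (val y)) (QPg _ (valP y))).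
  by move=> x; apply: val_inj; exact: fK (valP x).
by move=> y; apply: val_inj; exact: gK (valP y).
Qed.

Lemma intr_neq0_pchar (K : fieldType) (n : int) :
  n != 0 -> (forall p, p \in [pchar K] -> ~~ (p %| `|n|)%N) -> n%:~R != 0 :> K.
Proof.
move=> n_neq0 n_pchar'.
rewrite -[n]mulz_sign_abs intrM intr_sign mulf_eq0 signr_eq0 /= -pmulrn natf_neq0_pchar.
apply/pnatP=> [|p _ p_dvd]; first by rewrite absz_gt0.
by apply/negP=> /n_pchar'; rewrite p_dvd.
Qed.

Section ShortWeierstrass.
Variables (K : fieldType) (A : K).

Definition psi3 (x : K) : K := 3%:R * x ^+ 4 + 6%:R * A * x ^+ 2 - A ^+ 2.

Definition three_torsion (p : K * K) : bool := on_curve A p && (psi3 p.1 == 0).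

Lemma ec_addSS_eq_None (p q : K * K) :
  (ec_add A (Some p) (Some q) == None) = (p.1 == q.1) && (p.2 == - q.2).
Proof. by case: p q => [x1 y1] [x2 y2] /=; case: (x1 == x2); case: (y1 == - y2). Qed.

Hypotheses (two_neq0 : 2%:R != 0 :> K) (A_neq0 : A != 0).

Let four_neq0 : 4%:R != 0 :> K.
Proof. by rewrite -[4%N]/(2 * 2)%N natrM mulf_neq0. Qed.

Lemma psi3_neq0_of_2torsion x : x ^+ 3 + A * x = 0 -> psi3 x != 0.
Proof.
have -> : x ^+ 3 + A * x = x * (x ^+ 2 + A) by ring.
move/eqP; rewrite mulf_eq0 => /orP[/eqP-> | /eqP x2A].
  by rewrite /psi3 !expr0n /= !mulr0 !add0r oppr_eq0 expf_neq0.
have x2 : x ^+ 2 = - A by apply/eqP; rewrite -addr_eq0 x2A.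
have -> : psi3 x = - (4%:R * A ^+ 2) by rewrite /psi3 -[4%N]/(2 * 2)%N exprM x2; ring.
by rewrite oppr_eq0 mulf_neq0 // expf_neq0.
Qed.

Lemma tangent_x_eq x y (l := (3%:R * x ^+ 2 + A) / (2%:R * y)) :
  y != 0 -> y ^+ 2 = x ^+ 3 + A * x -> (l ^+ 2 - x - x == x) = (psi3 x == 0).
Proof.
move=> y_neq0 on_xy; rewrite -subr_eq0.
have four_y2_neq0 : 4%:R * y ^+ 2 != 0 by rewrite mulf_neq0 ?expf_neq0.
have -> : l ^+ 2 - x - x - x = - psi3 x / (4%:R * y ^+ 2).
  by rewrite /l /psi3; field: on_xy; rewrite y_neq0 four_neq0 two_neq0.
by rewrite mulf_eq0 invr_eq0 (negbTE four_y2_neq0) orbF oppr_eq0.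
Qed.

Lemma ec_double x y (l := (3%:R * x ^+ 2 + A) / (2%:R * y)) : y != 0 ->
  ec_add A (Some (x, y)) (Some (x, y)) = Some (l ^+ 2 - x - x, l * (x - (l ^+ 2 - x - x)) - y).
Proof.
move=> y_neq0; have yNy : (y == - y) = false.
  by apply/negbTE; rewrite -addr_eq0 -mulr2n -mulr_natl mulf_neq0.
by rewrite /= eqxx yNy.
Qed.

Lemma ec_triple_eq_None x y : on_curve A (x, y) ->
  (ec_add A (Some (x, y)) (ec_add A (Some (x, y)) (Some (x, y))) == None) = (psi3 x == 0).
Proof.
move=> /eqP on_xy; have [y0 | y_neq0] := eqVneq y 0.
  rewrite y0 /= eqxx oppr0 eqxx; apply/esym/negbTE/psi3_neq0_of_2torsion.
  by rewrite -on_xy y0 expr0n.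
rewrite ec_double // ec_addSS_eq_None /= -(tangent_x_eq y_neq0 on_xy) eq_sym.
by case: eqP => [-> | //]; rewrite subrr mulr0 sub0r opprK eqxx.
Qed.

Lemma three_torsionE p :
  on_curve A p && (ec_add A (Some p) (ec_add A (Some p) (Some p)) == None) = three_torsion p.
Proof.
case: p => x y; rewrite /three_torsion.
by case: (boolP (on_curve A _)) => // /ec_triple_eq_None ->.
Qed.

Lemma three_torsion_x_neq0 p : three_torsion p -> p.1 != 0.
Proof.
case/andP=> _; apply: contraTneq => ->.
by rewrite /psi3 !expr0n /= !mulr0 !add0r oppr_eq0 expf_neq0.
Qed.

End ShortWeierstrass.

Section Isomorphisms.
Variable K : fieldType.

Definition ec_scale (u : K) (p : K * K) : K * K := (u ^+ 2 * p.1, u ^+ 3 * p.2).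

Lemma ec_scaleK u : u != 0 -> cancel (ec_scale u) (ec_scale u^-1).
Proof. by move=> u_neq0 [x y]; rewrite /ec_scale /=; congr pair; field. Qed.

Lemma three_torsion_scale (A u : K) (p : K * K) : u != 0 ->
  three_torsion (u ^+ 4 * A) (ec_scale u p) = three_torsion A p.
Proof.
case: p => x y u_neq0; rewrite /three_torsion /on_curve /=.
have -> : (u ^+ 3 * y) ^+ 2 = u ^+ 6 * y ^+ 2 by ring.
have -> : (u ^+ 2 * x) ^+ 3 + u ^+ 4 * A * (u ^+ 2 * x) = u ^+ 6 * (x ^+ 3 + A * x) by ring.
have -> : psi3 (u ^+ 4 * A) (u ^+ 2 * x) = u ^+ 8 * psi3 A x by rewrite /psi3; ring.
by rewrite (inj_eq (mulfI (expf_neq0 _ u_neq0))) mulf_eq0 expf_eq0 (negbTE u_neq0) andbF.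
Qed.

(* Translation by the 2-torsion point (0, 0) of y^2 = x^3 + A x. *)
Definition ec_tr0 (A : K) (p : K * K) : K * K := (A / p.1, - A * p.2 / p.1 ^+ 2).

Lemma ec_tr0K (A : K) (p : K * K) : A != 0 -> p.1 != 0 -> ec_tr0 A (ec_tr0 A p) = p.
Proof.
by case: p => x y A_neq0 x_neq0; rewrite /ec_tr0 /=; congr pair; field; rewrite x_neq0 A_neq0.
Qed.

Lemma on_curve_tr0 (A : K) (p : K * K) :
  A != 0 -> p.1 != 0 -> on_curve A (ec_tr0 A p) = on_curve A p.
Proof.
case: p => x y A_neq0 x_neq0; rewrite /on_curve /ec_tr0 /=.
have -> : (- A * y / x ^+ 2) ^+ 2 = (A / x ^+ 2) ^+ 2 * y ^+ 2 by field.
have -> : (A / x) ^+ 3 + A * (A / x) = (A / x ^+ 2) ^+ 2 * (x ^+ 3 + A * x) by field.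
by rewrite (inj_eq (mulfI _)) // expf_neq0 // mulf_neq0 // invr_eq0 expf_neq0.
Qed.

Lemma psi3_tr0 (A x : K) : x != 0 ->
  psi3 A (A / x) = - A ^+ 2 * (x ^+ 4 - 6%:R * A * x ^+ 2 - 3%:R * A ^+ 2) / x ^+ 4.
Proof. by move=> x_neq0; rewrite /psi3; field. Qed.

End Isomorphisms.

Section PaperSets.
Variable K : fieldType.

Lemma S1rE (r : int) (p : K * K) : r%:~R != 0 :> K ->
  (p.2 ^+ 2 == p.1 ^+ 3 - (r%:~R)^-1 * p.1) &&
    (3%:R * (r%:~R) ^+ 2 * p.1 ^+ 4 - 6%:R * r%:~R * p.1 ^+ 2 - 1 == 0)
  = three_torsion (Ar K r) p.
Proof.
move=> r_neq0; rewrite /three_torsion /on_curve /Ar mulNr; congr andb.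
have -> : 3%:R * (r%:~R) ^+ 2 * p.1 ^+ 4 - 6%:R * r%:~R * p.1 ^+ 2 - 1
          = (r%:~R) ^+ 2 * psi3 (- (r%:~R)^-1) p.1 by rewrite /psi3; field.
by rewrite mulf_eq0 expf_eq0 (negbTE r_neq0) andbF.
Qed.

Lemma S1E (p : K * K) :
  (p.2 ^+ 2 == p.1 ^+ 3 - p.1) && (3%:R * p.1 ^+ 4 - 6%:R * p.1 ^+ 2 - 1 == 0)
  = three_torsion (-1) p.
Proof. by rewrite /three_torsion /on_curve /psi3 mulN1r; congr (_ && (_ == 0)); ring. Qed.

Lemma S0E (p : K * K) : 3%:R != 0 :> K ->
  (p.2 ^+ 2 == p.1 ^+ 3 - p.1) && (p.1 ^+ 4 + 6%:R * p.1 ^+ 2 - 3%:R == 0)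
  = (p.1 != 0) && three_torsion (-1) (ec_tr0 (-1) p).
Proof.
case: p => x y three_neq0 /=; have [-> | x_neq0] := eqVneq x 0.
  by rewrite !expr0n /= !mulr0 !add0r oppr_eq0 (negbTE three_neq0) andbF.
rewrite /three_torsion on_curve_tr0 ?oppr_eq0 ?oner_eq0 // /= psi3_tr0 //.
rewrite /on_curve /= mulN1r; congr andb.
have -> : - (-1) ^+ 2 * (x ^+ 4 - 6%:R * -1 * x ^+ 2 - 3%:R * (-1) ^+ 2) / x ^+ 4
          = - (x ^+ 4 + 6%:R * x ^+ 2 - 3%:R) / x ^+ 4 :> K by ring.
by rewrite mulf_eq0 invr_eq0 expf_eq0 (negbTE x_neq0) andbF orbF oppr_eq0.
Qed.

Lemma bij_E3_S1r (r : int) : 2%:R != 0 :> K -> r%:~R != 0 :> K ->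
  exists f : E3 K r -> S1r K r, bijective f.
Proof.
move=> two_neq0 r_neq0; have Ar_neq0 : Ar K r != 0 by rewrite oppr_eq0 invr_eq0.
by apply: (sig_bijective (f := id) (g := id)) => // p; rewrite three_torsionE // S1rE.
Qed.

Lemma bij_S1r_S1 (r : int) (eps : K) : r%:~R = eps ^+ 4 -> eps != 0 ->
  exists g : S1r K r -> S1 K, bijective g.
Proof.
move=> r_eps eps_neq0; have r_neq0 : r%:~R != 0 :> K by rewrite r_eps expf_neq0.
have Ar_eps : Ar K r = eps^-1 ^+ 4 * -1 by rewrite /Ar r_eps exprVn mulrN1.
have Ar_epsV : -1 = eps ^+ 4 * Ar K r.
  by rewrite Ar_eps exprVn mulrA divff ?mul1r ?expf_neq0.
apply: (sig_bijective (f := ec_scale eps) (g := ec_scale eps^-1)) => p.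
- by rewrite S1rE // S1E Ar_epsV three_torsion_scale.
- by rewrite S1E S1rE // Ar_eps three_torsion_scale ?invr_eq0.
- by rewrite ec_scaleK.
- by rewrite -{1}[eps]invrK ec_scaleK ?invr_eq0.
Qed.

Lemma bij_S1_S0 : 3%:R != 0 :> K -> exists h : S1 K -> S0 K, bijective h.
Proof.
move=> three_neq0; have N1_neq0 : -1 != 0 :> K by rewrite oppr_eq0 oner_eq0.
apply: (sig_bijective (f := ec_tr0 (-1)) (g := ec_tr0 (-1))) => p.
- rewrite S1E S0E // => p3; have x_neq0 := three_torsion_x_neq0 N1_neq0 p3.
  by rewrite ec_tr0K // p3 andbT mulf_neq0 // invr_eq0.
- by rewrite S0E // S1E => /andP[].
- by rewrite S1E => /(three_torsion_x_neq0 N1_neq0); apply: ec_tr0K.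
- by rewrite S0E // => /andP[x_neq0 _]; apply: ec_tr0K.
Qed.

End PaperSets.

Theorem lemma3p10 (K : fieldType) (r : int) (eps : K) :
  r != 0 ->
  (forall p : nat, p \in [pchar K] -> ~~ (p %| absz (2 * r)%R)%N) ->
  3%N \notin [pchar K] ->
  (r%:~R : K) = eps ^+ 4 ->
  exists f : E3 K r -> S1r K r, bijective f /\
  exists g : S1r K r -> S1 K, bijective g /\
  exists h : S1 K -> S0 K, bijective h.
Proof.
move=> r_neq0 pchar_2r pchar3 r_eps.
have /[!intrM] : (2 * r)%:~R != 0 :> K by apply: intr_neq0_pchar; rewrite // mulf_neq0.
rewrite mulf_eq0 negb_or => /andP[two_neq0 r_neq0K].
have three_neq0 : 3%:R != 0 :> K by apply: contra pchar3 => three0; rewrite inE three0.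
have eps_neq0 : eps != 0 by apply: contra_neq r_neq0K => eps0; rewrite r_eps eps0 expr0n.
have [f bij_f] := bij_E3_S1r two_neq0 r_neq0K.
have [g bij_g] := bij_S1r_S1 r_eps eps_neq0.
have [h bij_h] := bij_S1_S0 three_neq0.
by exists f; split=> //; exists g; split=> //; exists h.
Qed.
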